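(* Let $n\ge 1$ and $1\le k\le d$ be integers, set $p=k/d$, and let $\mathbf{x}_1,\dots,\mathbf{x}_n\in\mathbb{R}^d$ with $\mathbf{x}_i=(x_{i1},\dots,x_{id})$. Each node $i$ independently chooses a uniformly random subset $S_i\subseteq\{1,\dots,d\}$ of size $k$, and sets $h_{ij}=x_{ij}$ if $j\in S_i$ and $h_{ij}=0$ otherwise. For each coordinate $j$ let $M_j=|\{i: j\in S_i\}|$. Let $T:\{1,\dots,n\}\to\mathbb{R}\setminus\{0\}$ be any function such that $$\bar\beta=\Big(\sum_{m=1}^{n}\frac{k}{d\,T(m)}\binom{n-1}{m-1}p^{m-1}(1-p)^{n-m}\Big)^{-1}$$ is well defined (i.e. the sum is nonzero). Define the Rand-$k$-Spatial estimate of coordinate $j$ by $\hat{x}_j=\frac{1}{n}\frac{\bar\beta}{T(M_j)}\sum_{i=1}^n h_{ij}$ if $M_j\ge 1$ and $\hat{x}_j=0$ if $M_j=0$. Then for every $j$, $\mathbb{E}[\hat{x}_j]=\frac{1}{n}\sum_{i=1}^n x_{ij}$, where the expectation is over the random subsets $S_1,\dots,S_n$.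
   Context: This is the Rand-$k$-Spatial family of estimators for distributed sparsified mean estimation: the server receives only the sparsified vectors $\mathbf{h}_i=(h_{i1},\dots,h_{id})$ (with positions) and estimates the mean $\bar{\mathbf{x}}=\frac1n\sum_i\mathbf{x}_i$. The weights $\binom{n-1}{m-1}p^{m-1}(1-p)^{n-m}$ are the probabilities that $M_j=m$ conditional on a fixed node having sent coordinate $j$. *)

From HB Require Import structures.
From mathcomp Require Import all_boot all_order all_algebra.
Set Implicit Arguments. Unset Strict Implicit. Unset Printing Implicit Defensive.
Import Order.TTheory GRing.Theory Num.Theory.
Local Open Scope ring_scope.

Definition selection (n d : nat) := {ffun 'I_n -> {set 'I_d}}.

Definition valid_sel (n d k : nat) (S : selection n d) : bool :=
  [forall i, #|S i| == k]%N.

(* expectation under the uniform distribution on valid selections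
   (= product of independent uniform k-subsets) *)
Definition expect_sel {R : realFieldType} (n d k : nat) (f : selection n d -> R) : R :=
  (\sum_(S : selection n d | valid_sel k S) f S) /
  (#|[pred S : selection n d | valid_sel k S]|)%:R.

Definition hcoord {R : realFieldType} (n d : nat) (x : 'M[R]_(n, d))
  (S : selection n d) (i : 'I_n) (j : 'I_d) : R :=
  if j \in S i then x i j else 0.

Definition Mcount (n d : nat) (S : selection n d) (j : 'I_d) : nat :=
  #|[set i | j \in S i]|.

Definition pk {R : realFieldType} (d k : nat) : R := k%:R / d%:R.

Definition beta_sum {R : realFieldType} (n d k : nat) (T : nat -> R) : R :=
  \sum_(1 <= m < n.+1)
     (k%:R / (d%:R * T m)) * ('C(n.-1, m.-1))%:R
       * (pk d k) ^+ (m.-1) * (1 - pk d k) ^+ (n - m).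

Definition betabar {R : realFieldType} (n d k : nat) (T : nat -> R) : R :=
  (beta_sum n d k T)^-1.

Definition xhat {R : realFieldType} (n d k : nat) (T : nat -> R)
  (x : 'M[R]_(n, d)) (S : selection n d) (j : 'I_d) : R :=
  if (0 < Mcount S j)%N then
    (n%:R)^-1 * (betabar n d k T / T (Mcount S j)) * \sum_(i < n) hcoord x S i j
  else 0.

From HB Require Import structures.
From mathcomp Require Import all_boot all_order all_algebra.
From mathcomp Require Import ring.
Set Implicit Arguments.
Unset Strict Implicit.
Unset Printing Implicit Defensive.

Import Order.TTheory GRing.Theory Num.Theory.

(* A node sends coordinate j in C(d-1, k-1) = p C(d, k) of its C(d, k) equally likely
   choices, independently of the other nodes, so the set A of senders of j has the
   law P(A) = p^|A| (1-p)^(n-|A|).  Hence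
     E[xhat_j] = (betabar / n) sum_i x_ij sum_(A containing i) P(A) / T(|A|),
   and grouping the sets A containing i by their size m (there are C(n-1, m-1) of
   them) turns the inner sum into beta_sum = 1 / betabar. *)

Lemma card_draws_notin (T : finType) (t : T) k :
  #|[pred X : {set T} | (#|X| == k) && (t \notin X)]| = 'C(#|T|.-1, k).
Proof.
rewrite -(cardsC1 t) -cards_draws; apply: eq_card => X; rewrite !inE andbC.
congr (_ && _); apply/idP/subsetP => [tX y yX | sub_tC]; last first.
  by apply/negP => /sub_tC; rewrite !inE eqxx.
by rewrite !inE; apply: contraNneq tX => <-.
Qed.

Lemma card_draws_in (T : finType) (t : T) k :
  #|[pred X : {set T} | (#|X| == k.+1) && (t \in X)]| = 'C(#|T|.-1, k).
Proof.
have T_gt0 : (0 < #|T|)%N by apply/card_gt0P; exists t.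
have := cardID [pred X : {set T} | t \in X] [pred X : {set T} | #|X| == k.+1].
have -> : #|[pred X : {set T} | #|X| == k.+1]| = 'C(#|T|, k.+1).
  by rewrite -card_draws; apply: eq_card => X; rewrite !inE.
have -> : #|[predD [pred X : {set T} | #|X| == k.+1] & [pred X : {set T} | t \in X]]| =
          'C(#|T|.-1, k.+1).
  by rewrite -(card_draws_notin t); apply: eq_card => X; rewrite !inE andbC.
rewrite -[in 'C(#|T|, _)](prednK T_gt0) binS [RHS]addnC => /addIn <-.
by apply: eq_card => X; rewrite !inE.
Qed.

Lemma card_draws0_in (T : finType) (t : T) :
  #|[pred X : {set T} | (#|X| == 0) && (t \in X)]| = 0.
Proof.
by apply: eq_card0 => X; rewrite !inE cards_eq0; case: eqP => // ->; rewrite inE.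
Qed.

Lemma card_draws_in_mul (T : finType) (t : T) k :
  (#|[pred X : {set T} | (#|X| == k) && (t \in X)]| * #|T| = k * 'C(#|T|, k))%N.
Proof.
case: k => [|k]; first by rewrite card_draws0_in.
by rewrite card_draws_in mulnC mul_bin_diag.
Qed.

Lemma card_draws_notin_mul (T : finType) (t : T) k :
  (#|[pred X : {set T} | (#|X| == k) && (t \notin X)]| * #|T| =
   (#|T| - k) * 'C(#|T|, k))%N.
Proof. by rewrite card_draws_notin mulnC mul_bin_down. Qed.

Local Open Scope ring_scope.

Lemma sum_set_card (R : nmodType) (I : finType) (P : pred {set I}) (G : nat -> R) :
  \sum_(A : {set I} | P A) G #|A| =
  \sum_(m < #|I|.+1) G m *+ #|[pred A : {set I} | (#|A| == m) && P A]|.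
Proof.
pose size_of (A : {set I}) : 'I_#|I|.+1 := Ordinal (max_card A : (#|A| < #|I|.+1)%N).
rewrite (partition_big size_of predT) //=.
apply: eq_bigr => m _; rewrite (eq_bigr (fun _ => G m)) => [|A /andP[_ /eqP <-] //].
by rewrite sumr_const; congr (_ *+ _); apply: eq_card => A; rewrite !inE andbC.
Qed.

Lemma sum_sets_containing (R : nmodType) (I : finType) (i : I) (G : nat -> R) :
  \sum_(A : {set I} | i \in A) G #|A| = \sum_(m < #|I|) G m.+1 *+ 'C(#|I|.-1, m).
Proof.
rewrite sum_set_card big_ord_recl card_draws0_in mulr0n add0r.
by apply: eq_bigr => m _; rewrite -(card_draws_in i).
Qed.

Lemma card_ffun_forall (I U : finType) (P : pred U) :
  #|[pred f : {ffun I -> U} | [forall i, P (f i)]]| = (#|P| ^ #|I|)%N.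
Proof.
rewrite -card_ffun_on; apply: eq_card => f; rewrite !inE.
by apply/forallP/ffun_onP.
Qed.

Lemma sum_ffun_by_preimset (R : nmodType) (I U : finType) (P Q : pred U)
    (G : {set I} -> R) :
  \sum_(f : {ffun I -> U} | [forall i, P (f i)]) G [set i | Q (f i)] =
  \sum_(A : {set I}) G A *+ (#|predI P Q| ^ #|A| * #|predI P (predC Q)| ^ #|~: A|).
Proof.
rewrite (partition_big (fun f : {ffun I -> U} => [set i | Q (f i)]) predT) //=.
apply: eq_bigr => A _; rewrite (eq_bigr (fun _ => G A)) => [|f /andP[_ /eqP <-] //].
rewrite sumr_const; congr (_ *+ _).
pose F i := [pred u | P u && (Q u == (i \in A))].
transitivity #|family F|.
  apply: eq_card => f; rewrite !inE.
  apply/andP/familyP => [[/forallP Pf /eqP defA] i | Ff].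
    by rewrite /F -defA !inE Pf eqxx.
  split; first by apply/forallP => i; have /andP[] := Ff i.
  by apply/eqP/setP => i; rewrite inE; have /andP[_ /eqP] := Ff i.
rewrite card_family foldrE big_map big_enum /= (bigID (mem A)) /=.
have -> : #|~: A| = #|[pred i | i \notin A]| by apply: eq_card => i; rewrite !inE.
rewrite -!prod_nat_const; congr (_ * _)%N; apply: eq_bigr => i iA; apply: eq_card => u.
  by rewrite !inE unfold_in /= iA eqb_id.
by rewrite !inE unfold_in /= (negbTE iA) eqbF_neg.
Qed.

Definition senders (n d : nat) (S : selection n d) (j : 'I_d) : {set 'I_n} :=
  [set i | j \in S i].

Lemma eq_expect_sel (R : realFieldType) n d k (f g : selection n d -> R) :
  (forall S, f S = g S) -> expect_sel k f = expect_sel k g.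
Proof. by move=> fg; rewrite /expect_sel (eq_bigr _ (fun S _ => fg S)). Qed.

Lemma expect_sel_senders (R : realFieldType) n d k (j : 'I_d) (G : {set 'I_n} -> R) :
  (k <= d)%N ->
  expect_sel k (fun S => G (senders S j)) =
  \sum_(A : {set 'I_n}) G A * pk d k ^+ #|A| * (1 - pk d k) ^+ #|~: A|.
Proof.
move=> le_kd; have d_gt0 : (0 < d)%N by case: d j {le_kd} => [[]|].
have dR_neq0 : d%:R != 0 :> R by rewrite pnatr_eq0 -lt0n.
have binR_neq0 : 'C(d, k)%:R != 0 :> R by rewrite pnatr_eq0 -lt0n bin_gt0.
pose P := fun X : {set 'I_d} => #|X| == k.
pose Q := fun X : {set 'I_d} => j \in X.
have in_share : #|predI P Q|%:R = pk d k * 'C(d, k)%:R :> R.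
  apply: (mulIf dR_neq0); rewrite -natrM -[d in (_ * d)%N](card_ord d).
  by rewrite card_draws_in_mul card_ord natrM /pk; field.
have out_share : #|predI P (predC Q)|%:R = (1 - pk d k) * 'C(d, k)%:R :> R.
  apply: (mulIf dR_neq0); rewrite -natrM -[d in (_ * d)%N](card_ord d).
  by rewrite card_draws_notin_mul card_ord natrM natrB // /pk; field.
have card_valid : #|[pred S : selection n d | valid_sel k S]| = ('C(d, k) ^ n)%N.
  rewrite (card_ffun_forall _ P) card_ord -[d in 'C(d, k)](card_ord d) -card_draws.
  by congr (_ ^ _)%N; apply: eq_card => X; rewrite !inE.
rewrite /expect_sel card_valid (sum_ffun_by_preimset P Q) mulr_suml.
apply: eq_bigr => A _.
have -> : ('C(d, k) ^ n = 'C(d, k) ^ #|A| * 'C(d, k) ^ #|~: A|)%N.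
  by rewrite -expnD cardsC card_ord.
rewrite -[G A *+ _]mulr_natr !natrM !natrX in_share out_share !exprMn.
by field; rewrite !expf_neq0.
Qed.

Lemma beta_sumE (R : realFieldType) n d k (T : nat -> R) (i : 'I_n) :
  \sum_(A : {set 'I_n} | i \in A)
     (T #|A|)^-1 * pk d k ^+ #|A| * (1 - pk d k) ^+ #|~: A| = beta_sum n d k T.
Proof.
under eq_bigr => A _ do rewrite -[#|~: A|](addKn #|A|) cardsC card_ord.
rewrite (sum_sets_containing i
  (fun m => (T m)^-1 * pk d k ^+ m * (1 - pk d k) ^+ (n - m))).
rewrite card_ord /beta_sum big_add1 big_mkord; apply: eq_bigr => m _ /=.
by rewrite -mulr_natr invfM exprS /pk; ring.
Qed.

Lemma xhat_senders (R : realFieldType) n d k (T : nat -> R) (x : 'M[R]_(n, d))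
    (S : selection n d) (j : 'I_d) :
  xhat k T x S j =
  (n%:R)^-1 * betabar n d k T * \sum_(i in senders S j) x i j / T #|senders S j|.
Proof.
rewrite /xhat /Mcount -/(senders S j); case: ifPn => [_ | ]; last first.
  by rewrite lt0n negbK cards_eq0 => /eqP ->; rewrite big_set0 mulr0.
rewrite -!mulrA; congr (_ * (_ * _)); rewrite mulr_sumr [RHS]big_mkcond.
by apply: eq_bigr => i _; rewrite /hcoord inE; case: ifP => _; rewrite ?mulr0 // mulrC.
Qed.

Theorem lemma2 (R : realFieldType) (n d k : nat)
  (hn : (1 <= n)%N) (hk : (1 <= k)%N) (hkd : (k <= d)%N)
  (x : 'M[R]_(n, d)) (T : nat -> R)
  (hT : forall m : nat, (1 <= m <= n)%N -> T m != 0)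
  (hbeta : beta_sum n d k T != 0) (j : 'I_d) :
  expect_sel k (fun S => xhat k T x S j) = (n%:R)^-1 * \sum_(i < n) x i j.
Proof.
rewrite (eq_expect_sel _ (fun S => xhat_senders k T x S j)).
rewrite (expect_sel_senders j
  (fun A => (n%:R)^-1 * betabar n d k T * \sum_(i in A) x i j / T #|A|)) //.
under eq_bigr => A _ do rewrite -!mulrA mulr_suml.
rewrite -!mulr_sumr; congr (_ * _).
rewrite (exchange_big_dep predT) //= mulr_sumr; apply: eq_bigr => i _.
under eq_bigr => A _ do rewrite -mulrA (mulrA _^-1).
by rewrite -mulr_sumr beta_sumE mulrCA mulVf ?mulr1.
Qed.
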